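(* Let $W$ be a finite reflection group acting linearly on a Euclidean vector space $\mathbb{E}$, and let $Z\subseteq\mathbb{E}$ be a $W$-invariant convex polytope. For $v\in\mathbb{E}$ let $n=v-\mathrm{pr}_Z(v)$. Then every (closed) $W$-chamber that contains $v$ also contains $n$.
   Context: $\mathrm{pr}_Z$ is the nearest-point projection onto $Z$. The $W$-chambers are the closed simplicial cones cut out by the reflection hyperplanes of $W$. *)

(* Euclidean space = row vectors 'rV[R]_d over a real field R. *)
From HB Require Import structures.
From mathcomp Require Import all_boot all_order all_algebra.
Set Implicit Arguments. Unset Strict Implicit. Unset Printing Implicit Defensive.
Import Order.TTheory GRing.Theory Num.Theory.
Local Open Scope ring_scope.

Definition dotv (R : realFieldType) (d : nat) (u v : 'rV[R]_d) : R :=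
  \sum_(i < d) u 0 i * v 0 i.

(* orthogonal reflection through the hyperplane a^perp (a <> 0), acting on
   row vectors from the right: x *m reflmx a = x - 2 (x.a)/(a.a) a *)
Definition reflmx (R : realFieldType) (d : nat) (a : 'rV[R]_d) : 'M[R]_d :=
  1%:M - (2 / dotv a a) *: (a^T *m a).

Definition is_reflection_root (R : realFieldType) (d : nat)
    (W : seq 'M[R]_d) (a : 'rV[R]_d) : Prop :=
  a != 0 /\ reflmx a \in W.

(* W (given by the finite list of its elements) is a finite reflection group
   acting on 'rV_d by x |-> x *m w: it contains 1, is closed under products,
   and every element is a product of reflections belonging to W. *)
Definition finite_reflection_group (R : realFieldType) (d : nat)
    (W : seq 'M[R]_d) : Prop :=
  [/\ 1%:M \in W,
      (forall w1 w2, w1 \in W -> w2 \in W -> w1 *m w2 \in W) &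
      (forall w, w \in W -> exists rs : seq 'rV[R]_d,
          (forall a, a \in rs -> is_reflection_root W a) /\
          w = foldr (fun a M => reflmx a *m M) 1%:M rs)].

Definition in_hull (R : realFieldType) (d : nat) (S : seq 'rV[R]_d)
    (x : 'rV[R]_d) : Prop :=
  exists lam : 'I_(size S) -> R,
    [/\ (forall i, 0 <= lam i), \sum_i lam i = 1 &
        x = \sum_i lam i *: S`_i].

Definition is_nearest (R : realFieldType) (d : nat) (Z : 'rV[R]_d -> Prop)
    (v p : 'rV[R]_d) : Prop :=
  Z p /\ forall z, Z z -> dotv (v - p) (v - p) <= dotv (v - z) (v - z).

Definition regular_point (R : realFieldType) (d : nat) (W : seq 'M[R]_d)
    (c : 'rV[R]_d) : Prop :=
  forall a, is_reflection_root W a -> dotv a c != 0.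

(* the closed W-chamber containing the regular point c: the closure of the
   connected component of the complement of the reflection hyperplanes
   that contains c *)
Definition chamber (R : realFieldType) (d : nat) (W : seq 'M[R]_d)
    (c : 'rV[R]_d) (x : 'rV[R]_d) : Prop :=
  forall a, is_reflection_root W a -> 0 <= dotv a c * dotv a x.

From HB Require Import structures.
From mathcomp Require Import all_boot all_order all_algebra.
From mathcomp Require Import lra.
Set Implicit Arguments. Unset Strict Implicit. Unset Printing Implicit Defensive.
Import Order.TTheory GRing.Theory Num.Theory.
Local Open Scope ring_scope.

(* Let a be a root of W and s_a its reflection.  Since Z is s_a-invariant,
   s_a p lies in Z, and s_a p - p is a multiple of a; the obtuse-angle
   characterisation of the nearest point then gives <a,p><a,v-p> >= 0.
   So if <a,p> has the sign of <a,v> then <a,v-p> does too, and otherwise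
   <a,v-p> = <a,v> - <a,p> has that sign trivially. *)

Section InnerProduct.
Variables (R : realFieldType) (d : nat).
Implicit Types (u v w x : 'rV[R]_d).

Lemma dotvC u v : dotv u v = dotv v u.
Proof. by apply: eq_bigr => i _; rewrite mulrC. Qed.

Lemma dotvDr u v w : dotv u (v + w) = dotv u v + dotv u w.
Proof. by rewrite /dotv -big_split; apply: eq_bigr => i _; rewrite mxE mulrDr. Qed.

Lemma dotvZr u v k : dotv u (k *: v) = k * dotv u v.
Proof. by rewrite /dotv mulr_sumr; apply: eq_bigr => i _; rewrite mxE mulrCA. Qed.

Lemma dotvNr u v : dotv u (- v) = - dotv u v.
Proof. by rewrite -scaleN1r dotvZr mulN1r. Qed.

Lemma dotvBr u v w : dotv u (v - w) = dotv u v - dotv u w.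
Proof. by rewrite dotvDr dotvNr. Qed.

Lemma dotvZl u v k : dotv (k *: v) u = k * dotv v u.
Proof. by rewrite dotvC dotvZr dotvC. Qed.

Lemma dotvBl u v w : dotv (v - w) u = dotv v u - dotv w u.
Proof. by rewrite dotvC dotvBr !(dotvC u). Qed.

Lemma dotv_gt0 u : u != 0 -> 0 < dotv u u.
Proof.
move=> u_neq0; rewrite lt_def sumr_ge0 ?andbT => [|i _]; last first.
  by rewrite -expr2 sqr_ge0.
apply: contra u_neq0 => /eqP u2_eq0; apply/eqP/rowP => j; rewrite mxE.
have sq_ge0 (k : 'I_d) : true -> 0 <= u 0 k * u 0 k.
  by move=> _; rewrite -expr2 sqr_ge0.
by apply/eqP; rewrite -sqrf_eq0 expr2 (psumr_eq0P sq_ge0 u2_eq0).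
Qed.

Lemma dotv_subZ u w t :
  dotv (u - t *: w) (u - t *: w) =
  dotv u u - (t * dotv u w) *+ 2 + t ^+ 2 * dotv w w.
Proof.
rewrite dotvBl !dotvBr !dotvZl !dotvZr (dotvC w u).
by rewrite mulrA -expr2 mulr2n opprB opprD !addrA [RHS]addrAC.
Qed.

Lemma reflmxE x a : x *m reflmx a = x - (2 / dotv a a * dotv x a) *: a.
Proof.
rewrite /reflmx mulmxBr mulmx1 -scalemxAr mulmxA.
have -> : x *m a^T = (dotv x a)%:M.
  apply/matrixP => i j; rewrite !ord1 !mxE /= mulr1n.
  by apply: eq_bigr => k _; rewrite !mxE.
by rewrite mul_scalar_mx scalerA.
Qed.

End InnerProduct.

Section NearestPoint.
Variables (R : realFieldType) (d : nat).
Implicit Types (v p x y z : 'rV[R]_d) (Z : 'rV[R]_d -> Prop).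

Definition convex_set Z :=
  forall x y t, 0 <= t -> t <= 1 -> Z x -> Z y -> Z ((1 - t) *: x + t *: y).

Lemma convex_in_hull (S : seq 'rV[R]_d) : convex_set (in_hull S).
Proof.
move=> x y t t_ge0 t_le1 [lam [lam_ge0 lam1 ->]] [mu [mu_ge0 mu1 ->]].
exists (fun i => (1 - t) * lam i + t * mu i); split.
- by move=> i; rewrite addr_ge0 // mulr_ge0 // subr_ge0.
- by rewrite big_split /= -!mulr_sumr lam1 mu1 !mulr1 subrK.
- rewrite !scaler_sumr -big_split /=.
  by apply: eq_bigr => i _; rewrite [RHS]scalerDl !scalerA.
Qed.

Lemma nearest_obtuse Z v p z :
  convex_set Z -> is_nearest Z v p -> Z z -> dotv (v - p) (z - p) <= 0.
Proof.
move=> Zconv [Zp p_min] Zz.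
set D := dotv (v - p) (z - p); set N := dotv (z - p) (z - p).
have moved_farther t : 0 <= t -> t <= 1 -> (t * D) *+ 2 <= t ^+ 2 * N.
  move=> t_ge0 t_le1; have := p_min _ (Zconv _ _ _ t_ge0 t_le1 Zp Zz).
  have -> : v - ((1 - t) *: p + t *: z) = (v - p) - t *: (z - p).
    by rewrite scalerBl scale1r scalerBr !opprD !opprK !addrA [RHS]addrAC.
  by rewrite dotv_subZ -/D -/N -addrA lerDl addrC subr_ge0.
rewrite leNgt; apply/negP => D_gt0.
have twoD_le := moved_farther 1 ler01 (lexx _).
rewrite mul1r expr1n mul1r in twoD_le.
have N_gt0 : 0 < N by apply: lt_le_trans twoD_le; rewrite mulr2n addr_gt0.
have t_ge0 : 0 <= D / N by rewrite divr_ge0 ?ltW.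
have t_le1 : D / N <= 1.
  by rewrite ler_pdivrMr // mul1r (le_trans _ twoD_le) // mulr2n lerDl ltW.
(* the step t = D / N would strictly decrease the distance *)
have := moved_farther _ t_ge0 t_le1.
have -> : (D / N) ^+ 2 * N = D / N * D by rewrite expr2 -mulrA divfK ?gt_eqF.
by rewrite mulr2n gerDl leNgt mulr_gt0 // divr_gt0.
Qed.

Lemma nearest_reflect_root Z v p a :
  convex_set Z -> (forall x, Z x -> Z (x *m reflmx a)) -> a != 0 ->
  is_nearest Z v p -> 0 <= dotv a p * dotv a (v - p).
Proof.
move=> Zconv Zrefl a_neq0 p_near.
have := nearest_obtuse Zconv p_near (Zrefl _ p_near.1).
rewrite reflmxE addrAC subrr add0r dotvNr dotvZr oppr_le0 !(dotvC _ a).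
have aa_gt0 := dotv_gt0 a_neq0.
by rewrite -!mulrA pmulr_rge0 // pmulr_rge0 // invr_gt0.
Qed.

End NearestPoint.

Lemma mulr_subr_ge0 (R : realFieldType) (A V P : R) :
  0 <= A * V -> 0 <= P * (V - P) -> 0 <= A * (V - P).
Proof. by move=> AV_ge0 PVP_ge0; have [A_ge0|A_lt0] := leP 0 A; nra. Qed.

Theorem mainTheorem18 (R : realFieldType) (d : nat) (W : seq 'M[R]_d)
    (S : seq 'rV[R]_d) (v p : 'rV[R]_d) :
  finite_reflection_group W ->
  (forall w x, w \in W -> in_hull S x -> in_hull S (x *m w)) ->
  is_nearest (in_hull S) v p ->
  forall c : 'rV[R]_d, regular_point W c ->
    chamber W c v -> chamber W c (v - p).
Proof.
move=> _ S_inv p_near c _ v_in a a_root.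
have [a_neq0 refl_a_in_W] := a_root.
have Z_refl x : in_hull S x -> in_hull S (x *m reflmx a) by exact: S_inv.
have := nearest_reflect_root (@convex_in_hull _ _ S) Z_refl a_neq0 p_near.
rewrite !dotvBr; exact: mulr_subr_ge0 (v_in a a_root).
Qed.
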